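(* Consider the linear program $$z^*=\min\Big\{c^\top x+\sum_{v\in V_+}\theta_v:\ \theta_v\ge\sum_{\xi}p_\xi w_vy^\xi_v\ \forall v;\ y^\xi(S)\ge k_\xi(S)+x(E(S))-|S|\ \forall\emptyset\ne S\subseteq V_+,\xi\in[N];\ x\in\mathcal{X};\ y\in[\mathbf 0,b]^N\Big\}.$$ Suppose it is solved to optimality, and let $\alpha^*\ge0$ and $\beta^*\le0$ be optimal dual values associated with the constraints $y^\xi(S)\ge k_\xi(S)+x(E(S))-|S|$ and the upper bound constraints $y^\xi_v\le b_v$, respectively. Then $$z^*=\min\Big\{c^\top x+\mathbf 1^\top\theta:\ x\in\mathcal{X},\ \theta\in\operatorname{proj}_\theta(\Gamma(x,\alpha^*,\beta^* ))\Big\}.$$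
   Context: $G=(V,E)$ complete undirected graph, $V=\{0\}\cup V_+$ ($V_+$ customers), edge costs $c\in\mathbb{Q}^E_{\ge0}$; capacity $C>0$; scenarios $\xi\in[N]$ with demands $d^\xi\in\mathbb{Q}^{V_+}_{\ge0}$ ($d^\xi(v)\le C$) and probabilities $p_\xi\ge0$, $\sum_\xi p_\xi=1$. $f(S)=\sum_{i\in S}f(i)$; $k_\xi(S)=\lceil d^\xi(S)/C\rceil$; $\bar d=\sum_\xi p_\xi d^\xi$. $E(S)$: edges with both ends in $S$; $\delta(S)$: edges with exactly one end in $S$. $\mathcal{X}$ is one of $\mathcal{X}_{\mathrm{sub}}=\{x\in[0,2]^E: x(\delta(v))=2\ \forall v\in V_+,\ x(E(S))\le|S|-1\ \forall\emptyset\ne S\subseteq V_+\}$ or $\mathcal{X}_{\mathrm{cvrp}}=\mathcal{X}_{\mathrm{sub}}\cap\{x:x(\delta(0))=2k,\ x(E(S))\le|S|-\lceil\bar d(S)/C\rceil\}$. Fixed $w\in\mathbb{Q}^{V_+}_{\ge0}$, $b\in\mathbb{Z}^{V_+}_{\ge0}$; $y\in\mathbb{R}^{[N]\times V_+}$ has entries $y^\xi_v$; $[\mathbf 0,b]^N=\{y:0\le y^\xi_v\le b_v\}$. For multipliers $\alpha=(\alpha^\xi_S)\ge0$, $\beta=(\beta^\xi_v)\le0$: $\nu(\alpha,\beta)=\sum_\xi\sum_S\alpha^\xi_S(k_\xi(S)-|S|)+\sum_\xi\sum_v\beta^\xi_vb_v$, and for $x\in\mathcal{X}$, $\Gamma(x,\alpha,\beta)$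 is the set of $(\theta,y)\in\mathbb{R}^{V_+}_{\ge0}\times[\mathbf 0,b]^N$ with $\sum_\xi\sum_v(\beta^\xi_v+\sum_{S\ni v}\alpha^\xi_S)y^\xi_v\ge\sum_\xi\sum_S\alpha^\xi_Sx(E(S))+\nu(\alpha,\beta)$ and $\theta_v\ge\sum_\xi p_\xi w_vy^\xi_v$ for all $v$; $\operatorname{proj}_\theta$ is projection onto $\theta$. *)

From HB Require Import structures.
From mathcomp Require Import all_boot all_order all_algebra.
From mathcomp Require Import reals.
Set Implicit Arguments. Unset Strict Implicit. Unset Printing Implicit Defensive.
Import Order.TTheory GRing.Theory Num.Theory.
Local Open Scope ring_scope.

(* All variables are free; bounds are written as explicit rows.        *)

Inductive sense := Ge | Le | Eq.

Record linsys (R : numDomainType) (J : finType) := LinSys {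
  lrow   : finType;
  lcoef  : lrow -> J -> R;
  lsense : lrow -> sense;
  lrhs   : lrow -> R }.

Section LP.
Variables (R : numDomainType) (J : finType).

Definition sat (s : sense) (a b : R) : Prop :=
  match s with Ge => b <= a | Le => a <= b | Eq => a = b end.

Definition lhs (L : linsys R J) (i : lrow L) (u : J -> R) : R :=
  \sum_j lcoef i j * u j.

Definition lp_feasible (L : linsys R J) (u : J -> R) : Prop :=
  forall i : lrow L, sat (lsense i) (lhs i u) (lrhs i).

Definition lp_obj (c : J -> R) (u : J -> R) : R := \sum_j c j * u j.

Definition lp_optval (L : linsys R J) (c : J -> R) (z : R) : Prop :=
  (exists u, lp_feasible L u /\ lp_obj c u = z) /\
  (forall u, lp_feasible L u -> z <= lp_obj c u).

Definition sign_ok (s : sense) (l : R) : Prop :=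
  match s with Ge => 0 <= l | Le => l <= 0 | Eq => True end.

Definition dual_feasible (L : linsys R J) (c : J -> R) (lam : lrow L -> R) : Prop :=
  (forall j, \sum_(i : lrow L) lam i * lcoef i j = c j) /\
  (forall i : lrow L, sign_ok (lsense i) (lam i)).

Definition dual_obj (L : linsys R J) (lam : lrow L -> R) : R :=
  \sum_(i : lrow L) lam i * lrhs i.

Definition dual_optimal (L : linsys R J) (c : J -> R) (lam : lrow L -> R) : Prop :=
  dual_feasible c lam /\
  (forall lam' : lrow L -> R, dual_feasible c lam' -> dual_obj lam' <= dual_obj lam).
End LP.
Arguments dual_feasible {R J} L c lam.
Arguments dual_obj {R J} L lam.
Arguments dual_optimal {R J} L c lam.
Arguments lp_feasible {R J} L u.
Arguments lp_optval {R J} L c z.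


(* The graph: V = 'I_n.+1, depot 0 = ord0, customers V_+ = 'I_n,       *)
(* customer i is the vertex lift ord0 i (value i+1).                   *)
(* Edges of the complete graph: pairs (u,v) with u < v.                *)

Definition Edge (n : nat) := {e : 'I_n.+1 * 'I_n.+1 | (nat_of_ord e.1 < nat_of_ord e.2)%N}.

Definition nes (n : nat) := {S : {set 'I_n} | S != set0}.

Definition cust (n : nat) (i : 'I_n) : 'I_n.+1 := lift ord0 i.

Definition inE_S (n : nat) (S : {set 'I_n}) (e : Edge n) : bool :=
  ((val e).1 \in (@cust n) @: S) && ((val e).2 \in (@cust n) @: S).

Definition inDelta (n : nat) (u : 'I_n.+1) (e : Edge n) : bool :=
  ((val e).1 == u) || ((val e).2 == u).

Section Model.
Variable R : realType.
Variables (n N : nat).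

Definition xE (S : {set 'I_n}) (x : Edge n -> R) : R :=
  \sum_(e | inE_S S e) x e.

Definition xDelta (u : 'I_n.+1) (x : Edge n -> R) : R :=
  \sum_(e | inDelta u e) x e.

Definition kxi (C : R) (d : 'I_N -> 'I_n -> R) (xi : 'I_N) (S : {set 'I_n}) : R :=
  (Num.ceil ((\sum_(v in S) d xi v) / C))%:~R.

Definition dbar (p : 'I_N -> R) (d : 'I_N -> 'I_n -> R) (v : 'I_n) : R :=
  \sum_xi p xi * d xi v.

(* X_sub:  x in [0,2]^E, x(delta(v)) = 2 (v in V_+),
           x(E(S)) <= |S| - 1  (nonempty S subset of V_+) *)
Definition Xsub_row := (Edge n + Edge n + 'I_n + nes n)%type.

Definition Xsub_coef (r : Xsub_row) (e : Edge n) : R :=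
  match r with
  | inl (inl (inl f)) => (e == f)%:R
  | inl (inl (inr f)) => (e == f)%:R
  | inl (inr v) => (inDelta (cust v) e)%:R
  | inr Sx => (inE_S (val Sx) e)%:R
  end.

Definition Xsub_sense (r : Xsub_row) : sense :=
  match r with
  | inl (inl (inl _)) => Ge
  | inl (inl (inr _)) => Le
  | inl (inr _) => Eq
  | inr _ => Le
  end.

Definition Xsub_rhs (r : Xsub_row) : R :=
  match r with
  | inl (inl (inl _)) => 0
  | inl (inl (inr _)) => 2
  | inl (inr _) => 2
  | inr Sx => (#|val Sx|%:R - 1)
  end.

Definition Xsub : linsys R (Edge n) := LinSys Xsub_coef Xsub_sense Xsub_rhs.

(* X_cvrp = X_sub cap { x(delta(0)) = 2k, x(E(S)) <= |S| - ceil(dbar(S)/C) } *)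
Definition Xcvrp_row := (Xsub_row + unit + nes n)%type.

Section Cvrp.
Variables (k : nat) (C : R) (p : 'I_N -> R) (d : 'I_N -> 'I_n -> R).

Definition Xcvrp_coef (r : Xcvrp_row) (e : Edge n) : R :=
  match r with
  | inl (inl r') => Xsub_coef r' e
  | inl (inr _) => (inDelta ord0 e)%:R
  | inr Sx => (inE_S (val Sx) e)%:R
  end.

Definition Xcvrp_sense (r : Xcvrp_row) : sense :=
  match r with
  | inl (inl r') => Xsub_sense r'
  | inl (inr _) => Eq
  | inr _ => Le
  end.

Definition Xcvrp_rhs (r : Xcvrp_row) : R :=
  match r with
  | inl (inl r') => Xsub_rhs r'
  | inl (inr _) => 2 * k%:R
  | inr Sx => #|val Sx|%:R -
      (Num.ceil ((\sum_(v in val Sx) dbar p d v) / C))%:~R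
  end.

Definition Xcvrp : linsys R (Edge n) := LinSys Xcvrp_coef Xcvrp_sense Xcvrp_rhs.
End Cvrp.

Definition Xsys (cvrp : bool) (k : nat) (C : R) (p : 'I_N -> R)
  (d : 'I_N -> 'I_n -> R) : linsys R (Edge n) :=
  if cvrp then Xcvrp k C p d else Xsub.

(* The full LP in variables (x, theta, y).                              *)

Definition Var := (Edge n + 'I_n + ('I_N * 'I_n))%type.

Section Full.
Variables (X : linsys R (Edge n)) (C : R) (c : Edge n -> R) (p : 'I_N -> R)
  (d : 'I_N -> 'I_n -> R) (w : 'I_n -> R) (b : 'I_n -> nat).

(* rows: X-rows | theta_v >= sum_xi p_xi w_v y^xi_v
        | y^xi(S) - x(E(S)) >= k_xi(S) - |S|   (alpha rows)
        | y^xi_v >= 0  | y^xi_v <= b_v  (beta rows) *)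
Definition Frow := (lrow X + 'I_n + ('I_N * nes n) + ('I_N * 'I_n) + ('I_N * 'I_n))%type.

Definition Fcoef (r : Frow) (j : Var) : R :=
  match r, j with
  | inl (inl (inl (inl r'))), inl (inl e) => lcoef r' e
  | inl (inl (inl (inl _))), _ => 0
  | inl (inl (inl (inr v))), inl (inr v') => (v' == v)%:R
  | inl (inl (inl (inr v))), inr (xi, v') => - (p xi * w v) * (v' == v)%:R
  | inl (inl (inl (inr _))), _ => 0
  | inl (inl (inr (xi, Sx))), inl (inl e) => - (inE_S (val Sx) e)%:R
  | inl (inl (inr (xi, Sx))), inr (xi', v) => ((xi' == xi) && (v \in val Sx))%:R
  | inl (inl (inr _)), _ => 0
  | inl (inr (xi, v)), inr (xi', v') => ((xi' == xi) && (v' == v))%:R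
  | inl (inr _), _ => 0
  | inr (xi, v), inr (xi', v') => ((xi' == xi) && (v' == v))%:R
  | inr _, _ => 0
  end.

Definition Fsense (r : Frow) : sense :=
  match r with
  | inl (inl (inl (inl r'))) => lsense r'
  | inl (inl (inl (inr _))) => Ge
  | inl (inl (inr _)) => Ge
  | inl (inr _) => Ge
  | inr _ => Le
  end.

Definition Frhs (r : Frow) : R :=
  match r with
  | inl (inl (inl (inl r'))) => lrhs r'
  | inl (inl (inl (inr _))) => 0
  | inl (inl (inr (xi, Sx))) => kxi C d xi (val Sx) - #|val Sx|%:R
  | inl (inr _) => 0
  | inr (xi, v) => (b v)%:R
  end.

Definition FullLP : linsys R Var := LinSys Fcoef Fsense Frhs.

Definition Fobj (j : Var) : R :=
  match j with
  | inl (inl e) => c e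
  | inl (inr _) => 1
  | inr _ => 0
  end.

Definition row_alpha (xi : 'I_N) (S : nes n) : Frow :=
  inl (inl (inr (xi, S))).
Definition row_beta (xi : 'I_N) (v : 'I_n) : Frow := inr (xi, v).

Definition nu (alpha : 'I_N -> {set 'I_n} -> R) (beta : 'I_N -> 'I_n -> R) : R :=
  \sum_xi \sum_(S : {set 'I_n} | S != set0) alpha xi S * (kxi C d xi S - #|S|%:R)
  + \sum_xi \sum_v beta xi v * (b v)%:R.

Definition Gamma (x : Edge n -> R) (alpha : 'I_N -> {set 'I_n} -> R)
  (beta : 'I_N -> 'I_n -> R) (theta : 'I_n -> R) (y : 'I_N -> 'I_n -> R) : Prop :=
  (forall v, 0 <= theta v) /\
  (forall xi v, 0 <= y xi v <= (b v)%:R) /\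
  \sum_xi \sum_v (beta xi v +
      \sum_(S : {set 'I_n} | (S != set0) && (v \in S)) alpha xi S) * y xi v
    >= \sum_xi \sum_(S : {set 'I_n} | S != set0) alpha xi S * xE S x + nu alpha beta /\
  (forall v, theta v >= \sum_xi p xi * w v * y xi v).
End Full.
End Model.

From HB Require Import structures.
From mathcomp Require Import all_boot all_order all_algebra.
From mathcomp Require Import reals.
From mathcomp Require Import ring lra.
Set Implicit Arguments. Unset Strict Implicit. Unset Printing Implicit Defensive.
Import Order.TTheory GRing.Theory Num.Theory.
Local Open Scope ring_scope.

(* Strong LP duality, obtained from Farkas' lemma by Fourier-Motzkin elimination,
   shows that the optimal value z is at most the dual objective of the optimal
   multipliers alpha, beta.  Weighting the rows of the LP with these
   multipliers, the alpha- and beta-rows add up exactly to the inequality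
   defining Gamma(x, alpha, beta), while the remaining rows hold explicitly when
   x is in X and (theta, y) is in Gamma.  Hence every such (x, theta) costs at
   least the dual objective, so at least z; conversely an optimal solution of
   the LP lies in Gamma because alpha >= 0 and beta <= 0, so z is attained. *)

Section BigSums.
Variable R : pzSemiRingType.

Lemma big_pair (I K : finType) (F : I * K -> R) :
  \sum_q F q = \sum_i \sum_k F (i, k).
Proof. by rewrite pair_bigA; apply: eq_bigr => -[]. Qed.

Lemma sum_mul0l (I : finType) (F : I -> R) : \sum_i 0 * F i = 0.
Proof. by rewrite big1 // => i _; rewrite mul0r. Qed.

Lemma sum_indicator (I : finType) (P : pred I) (F : I -> R) :
  \sum_i (P i)%:R * F i = \sum_(i | P i) F i.
Proof.
rewrite [RHS]big_mkcond; apply: eq_bigr => i _.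
by case: (P i); rewrite ?mul1r ?mul0r.
Qed.

Lemma sum_indicator_pair (I K : finType) (a : I) (P : pred K) (F : I -> K -> R) :
  \sum_i \sum_k ((i == a) && P k)%:R * F i k = \sum_(k | P k) F a k.
Proof.
rewrite (bigD1 a) //= [X in _ + X]big1 ?addr0 => [|i /negbTE i_a]; last first.
  by rewrite big1 // => k _; rewrite i_a mul0r.
by rewrite -[RHS]sum_indicator; apply: eq_bigr => k _; rewrite eqxx.
Qed.

Lemma sum_nonempty_sets n (F : {set 'I_n} -> R) :
  \sum_(S : {set 'I_n} | S != set0) F S = \sum_(S : nes n) F (val S).
Proof.
rewrite (reindex_omap (val : nes n -> {set 'I_n}) insub) => [|S S_nz]; last first.
  by rewrite insubT.
by apply: eq_bigl => S /=; rewrite valK eqxx (valP S).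
Qed.

Lemma sum_exchange_mem n (alpha : {set 'I_n} -> R) (y : 'I_n -> R) :
  \sum_v (\sum_(S | (S != set0) && (v \in S)) alpha S) * y v =
  \sum_(S : nes n) alpha (val S) * \sum_(v in val S) y v.
Proof.
under eq_bigr do rewrite mulr_suml.
rewrite -(exchange_big_dep predT) //= sum_nonempty_sets.
by apply: eq_bigr => S _; rewrite mulr_sumr.
Qed.

End BigSums.

Section Farkas.
Variables (R : realFieldType) (J : finType).

Definition dotp (a u : J -> R) : R := \sum_j a j * u j.

(* The pair [(a, r)] stands for the inequality [r <= dotp a u]. *)
Definition ineq := ((J -> R) * R)%type.

Definition ineq0 : ineq := (fun=> 0, 0).

Definition ineq_comb (x y : R) (r s : ineq) : ineq :=
  (fun j => x * r.1 j + y * s.1 j, x * r.2 + y * s.2).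

Definition solvable (I : finType) (f : I -> ineq) :=
  exists u, forall i, (f i).2 <= dotp (f i).1 u.

Inductive cone (I : finType) (f : I -> ineq) : ineq -> Prop :=
  | cone0 : cone f ineq0
  | coneI i : cone f (f i)
  | coneC x y r s : 0 <= x -> 0 <= y -> cone f r -> cone f s ->
      cone f (ineq_comb x y r s).

Definition refutable (I : finType) (f : I -> ineq) :=
  exists r, [/\ cone f r, forall j, r.1 j = 0 & 0 < r.2].

Lemma dotp_comb x y (r s : ineq) u :
  dotp (ineq_comb x y r s).1 u = x * dotp r.1 u + y * dotp s.1 u.
Proof.
rewrite /dotp !mulr_sumr -big_split /=.
by apply: eq_bigr => j _; rewrite mulrDl !mulrA.
Qed.

Lemma dotpZ x a u : dotp (fun j => x * a j) u = x * dotp a u.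
Proof. by rewrite /dotp mulr_sumr; apply: eq_bigr => j _; rewrite mulrA. Qed.

Lemma cone_trans (I K : finType) (f : I -> ineq) (g : K -> ineq) r :
  (forall k, cone f (g k)) -> cone g r -> cone f r.
Proof.
move=> fg; elim=> [|k|x y r1 s1 x0 y0 _ Cr _ Cs]; first exact: cone0.
- exact: fg.
- exact: coneC.
Qed.

Lemma cone_coefs (I : finType) (f : I -> ineq) r : cone f r ->
  exists2 lam : I -> R, forall i, 0 <= lam i &
    (forall j, r.1 j = \sum_i lam i * (f i).1 j) /\ r.2 = \sum_i lam i * (f i).2.
Proof.
elim=> [|i0|x y r1 s1 x0 y0 _ [l1 l1_ge0 [l1j l12]] _ [l2 l2_ge0 [l2j l22]]].
- exists (fun=> 0) => //.
  by split=> [j|]; rewrite /= big1 // => i _; rewrite mul0r.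
- exists (fun i => (i == i0)%:R) => [i|]; first by rewrite ler0n.
  have pick1 (F : I -> R) : F i0 = \sum_i (i == i0)%:R * F i.
    by rewrite (bigD1 i0) //= eqxx mul1r big1 ?addr0 // => i /negbTE ->; rewrite mul0r.
  by split=> [j|]; apply: pick1.
- exists (fun i => x * l1 i + y * l2 i) => [i|]; first by rewrite addr_ge0 ?mulr_ge0.
  split=> [j|] /=; rewrite ?l1j ?l2j ?l12 ?l22 !mulr_sumr -big_split /=;
    by apply: eq_bigr => i _; ring.
Qed.

Lemma exists_between (I : finType) (P Q : pred I) (l h : I -> R) :
  (forall i k, P i -> Q k -> l i <= h k) ->
  exists t, (forall i, P i -> l i <= t) /\ (forall k, Q k -> t <= h k).
Proof.
move=> lh; pose hmin := \big[Order.min/0]_(k | Q k) h k.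
exists (\big[Order.max/hmin]_(i | P i) l i).
split=> [i Pi|k Qk]; first exact: le_bigmax_cond.
by apply: bigmax_le => [|i Pi]; [exact: bigmin_le_cond | exact: lh].
Qed.

(* One Fourier-Motzkin step for the variable [j0]: the rows without [j0], and
   for each lower bound [i] and upper bound [k] on [u j0] the combination
   cancelling [j0]; all other indices give the trivial row [ineq0]. *)
Definition fm_elim (I : finType) (f : I -> ineq) (j0 : J) (q : I + I * I) : ineq :=
  let a i := (f i).1 j0 in
  match q with
  | inl i => if a i == 0 then f i else ineq0
  | inr (i, k) => if (0 < a i) && (a k < 0) then ineq_comb (- a k) (a i) (f i) (f k)
                  else ineq0
  end.

Section FMStep.
Variables (I : finType) (f : I -> ineq) (j0 : J).

Lemma fm_elim_cone q : cone f (fm_elim f j0 q).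
Proof.
case: q => [i|[i k]] /=; case: ifP => [|_]; try exact: cone0.
  by move=> _; apply: coneI.
case/andP=> ai_gt0 ak_lt0.
by apply: coneC; [rewrite oppr_ge0 ltW | rewrite ltW | apply: coneI ..].
Qed.

Lemma fm_elim_support (D : {set J}) :
  (forall i j, j \notin D -> (f i).1 j = 0) ->
  forall q j, j \notin D :\ j0 -> (fm_elim f j0 q).1 j = 0.
Proof.
move=> fD [i|[i k]] j; rewrite !inE negb_and negbK => /orP[/eqP->|jD] /=.
- by case: ifP => // /eqP.
- by case: ifP => // _; apply: fD.
- by case: ifP => //= _; ring.
- by case: ifP => //= _; rewrite !(fD _ j jD) !mulr0 addr0.
Qed.

Lemma fm_elim_lift : solvable (fm_elim f j0) -> solvable f.
Proof.
move=> [u u_sol]; pose a i := (f i).1 j0.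
pose s i := \sum_(j | j != j0) (f i).1 j * u j.
pose l i := ((f i).2 - s i) / a i.
have dotp_split i v : dotp (f i).1 v = a i * v j0 + \sum_(j | j != j0) (f i).1 j * v j.
  by rewrite /dotp (bigD1 j0).
have l_sorted i k : 0 < a i -> a k < 0 -> l i <= l k.
  move=> ai_gt0 ak_lt0; have := u_sol (inr (i, k)).
  rewrite /= ai_gt0 ak_lt0 /= dotp_comb !dotp_split -/(a i) -/(a k) -/(s i) -/(s k).
  by rewrite /l ler_pdivrMr // mulrAC ler_ndivlMr //; nra.
have [t [lo_t t_hi]] := exists_between l_sorted.
exists (fun j => if j == j0 then t else u j) => i.
have -> : dotp (f i).1 (fun j => if j == j0 then t else u j) = a i * t + s i.
  rewrite dotp_split eqxx; congr (_ + _); apply: eq_bigr => j /negbTE -> //.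
case: (ltrgtP (a i) 0) => ai.
- by move: (t_hi _ ai); rewrite /l ler_ndivlMr //; nra.
- by move: (lo_t _ ai); rewrite /l ler_pdivrMr //; nra.
- have := u_sol (inl i); rewrite /= -/(a i) ai eqxx dotp_split -/(a i) ai.
  by rewrite !mul0r !add0r.
Qed.

End FMStep.

Lemma fourier_motzkin (I : finType) (f : I -> ineq) (D : {set J}) :
  (forall i j, j \notin D -> (f i).1 j = 0) -> solvable f \/ refutable f.
Proof.
move: {2}#|D| (erefl #|D|) => m; elim: m I f D => [|m IH] I f D cardD fD.
  have D0 : D = set0 by apply/eqP; rewrite -cards_eq0 cardD.
  have f0 i j : (f i).1 j = 0 by apply: fD; rewrite D0 inE.
  have [i fi_gt0|no_pos] := pickP (fun i => 0 < (f i).2).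
    by right; exists (f i); split=> //; apply: coneI.
  left; exists (fun=> 0) => i; rewrite /dotp big1 => [|j _]; last by rewrite mulr0.
  by rewrite leNgt no_pos.
have [j0 j0D] : exists j0, j0 \in D by apply/card_gt0P; rewrite cardD.
have cardD' : #|D :\ j0| = m by move: cardD; rewrite (cardsD1 j0) j0D => -[].
case: (IH _ _ _ cardD' (fm_elim_support fD)) => [/fm_elim_lift|[r [Cr r1 r2]]].
  by left.
by right; exists r; split=> //; apply: cone_trans Cr; apply: fm_elim_cone.
Qed.

Theorem farkas (I : finType) (f : I -> ineq) : ~ solvable f ->
  exists2 lam : I -> R, forall i, 0 <= lam i &
    (forall j, \sum_i lam i * (f i).1 j = 0) /\ 0 < \sum_i lam i * (f i).2.
Proof.
move=> unsolvable.
case: (@fourier_motzkin I f setT) => [i j|//|[r [Cr r1 r2]]]; first by rewrite inE.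
have [lam lam_ge0 [lamj lam2]] := cone_coefs Cr.
by exists lam => //; split=> [j|]; rewrite -?lamj -?lam2.
Qed.

End Farkas.

Section Duality.
Variables (R : realFieldType) (J : finType) (L : linsys R J) (c : J -> R).

(* A row of sense [s] is equivalent to the two [>=]-rows obtained by scaling it
   with [sense_coef s true] and [sense_coef s false] (a factor 0 gives a
   trivial row). *)
Definition sense_coef (s : sense) (up : bool) : R :=
  match s, up with
  | Ge, true | Eq, true => 1
  | Le, false | Eq, false => -1
  | _, _ => 0
  end.

Lemma sat_sense_coef s (a b : R) :
  (forall up, sense_coef s up * b <= sense_coef s up * a) -> sat s a b.
Proof.
move=> /[dup] /(_ true) up /(_ false); case: s up => /= up dn; lra.
Qed.

Lemma sign_ok_sense_coef s (lam : bool -> R) : (forall up, 0 <= lam up) ->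
  sign_ok s (\sum_up lam up * sense_coef s up).
Proof.
move=> /[dup] /(_ true) up /(_ false); rewrite big_bool; case: s up => /= up dn; lra.
Qed.

Lemma sign_ok_mul_slack s l (a b : R) : sign_ok s l -> sat s a b -> 0 <= l * (a - b).
Proof.
case: s => /= l_sign ab; first by rewrite mulr_ge0 ?subr_ge0.
  by rewrite mulr_le0 ?subr_le0.
by rewrite ab subrr mulr0.
Qed.

Lemma sum_comb_lhs (lam : lrow L -> R) u :
  \sum_j (\sum_i lam i * lcoef i j) * u j = \sum_i lam i * lhs i u.
Proof.
under eq_bigr do rewrite mulr_suml; rewrite exchange_big /=.
by apply: eq_bigr => i _; rewrite /lhs mulr_sumr; apply: eq_bigr => j _; rewrite mulrA.
Qed.

Lemma sum_comb_rhs_le (lam : lrow L -> R) u :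
  (forall i, sign_ok (lsense i) (lam i)) -> lp_feasible L u ->
  \sum_i lam i * lrhs i <= \sum_i lam i * lhs i u.
Proof.
move=> lam_sign u_feas; rewrite -subr_ge0 -sumrB; apply: sumr_ge0 => i _.
by rewrite -mulrBr; apply: sign_ok_mul_slack.
Qed.

Lemma lp_obj_sub_dual_obj (lam : lrow L -> R) u : dual_feasible L c lam ->
  lp_obj c u - dual_obj L lam = \sum_i lam i * (lhs i u - lrhs i).
Proof.
move=> [lam_comb _]; rewrite /lp_obj /dual_obj.
under eq_bigr do rewrite -lam_comb.
by rewrite sum_comb_lhs -sumrB; apply: eq_bigr => i _; rewrite mulrBr.
Qed.

Lemma dual_feasible_normalize (D : lrow L -> R) l0 : 0 < l0 ->
  (forall i, sign_ok (lsense i) (D i)) ->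
  (forall j, \sum_i D i * lcoef i j = l0 * c j) ->
  dual_feasible L c (fun i => D i / l0) /\
  dual_obj L (fun i => D i / l0) = (\sum_i D i * lrhs i) / l0.
Proof.
move=> l0_gt0 D_sign D_coef; split; first split.
- move=> j; under eq_bigr do rewrite mulrAC.
  by rewrite -mulr_suml D_coef mulrAC divff ?mul1r // gt_eqF.
- move=> i; have := D_sign i; case: (lsense i) => //= D_i.
    by rewrite divr_ge0 // ltW.
  by rewrite pmulr_lle0 // invr_gt0.
- by rewrite /dual_obj mulr_suml; apply: eq_bigr => i _; rewrite mulrAC.
Qed.

Lemma lp_strong_duality z eps : lp_optval L c z -> 0 < eps ->
  exists2 lam, dual_feasible L c lam & z - eps < dual_obj L lam.
Proof.
move=> [[us [us_feas us_obj]] us_opt] eps_gt0.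
pose row (F : lrow L -> R) (g : R) (q : (lrow L * bool) + unit) :=
  if q is inl (i, up) then sense_coef (lsense i) up * F i else g.
pose f q : ineq R J :=
  (fun j => row (fun i => lcoef i j) (- c j) q, row (fun i => lrhs i) (eps - z) q).
have unsolvable : ~ solvable f.
  move=> [u u_sol].
  have u_feas : lp_feasible L u.
    move=> i; apply: sat_sense_coef => up.
    by have := u_sol (inl (i, up)); rewrite /= dotpZ.
  have := us_opt u u_feas; have := u_sol (inr tt); rewrite /= /dotp /lp_obj.
  under eq_bigr do rewrite mulNr; rewrite sumrN; lra.
have [lam lam_ge0 [lam_coef lam_rhs]] := farkas unsolvable.
pose D i := \sum_up lam (inl (i, up)) * sense_coef (lsense i) up.
pose l0 := lam (inr tt).
have sum_row F g : \sum_q lam q * row F g q = \sum_i D i * F i + l0 * g.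
  rewrite big_sumType (big_pred1 tt) //=; congr (_ + _).
  under [RHS]eq_bigr do rewrite mulr_suml.
  by rewrite pair_bigA; apply: eq_bigr => -[i up] _ /=; rewrite mulrA.
have D_coef j : \sum_i D i * lcoef i j = l0 * c j.
  by have := lam_coef j; rewrite sum_row; lra.
have D_sign i : sign_ok (lsense i) (D i) by apply: sign_ok_sense_coef.
have D_rhs_gt : l0 * (z - eps) < \sum_i D i * lrhs i.
  by move: lam_rhs; rewrite sum_row; lra.
have D_rhs_le : \sum_i D i * lrhs i <= l0 * z.
  suff <- : \sum_i D i * lhs i us = l0 * z by apply: sum_comb_rhs_le.
  rewrite -sum_comb_lhs -us_obj /lp_obj mulr_sumr.
  by apply: eq_bigr => j _; rewrite D_coef mulrA.
have l0_gt0 : 0 < l0.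
  rewrite lt_def lam_ge0 andbT; apply/eqP => l0_0.
  by move: D_rhs_gt D_rhs_le; rewrite l0_0 !mul0r; lra.
have [D_feas D_obj] := dual_feasible_normalize l0_gt0 D_sign D_coef.
by exists (fun i => D i / l0); rewrite // D_obj ltr_pdivlMr // mulrC.
Qed.

Lemma optval_le_dual_optimal z lam :
  lp_optval L c z -> dual_optimal L c lam -> z <= dual_obj L lam.
Proof.
move=> z_opt [_ lam_max]; apply/ler_addgt0Pr => eps eps_gt0.
have [lam' lam'_feas lam'_obj] := lp_strong_duality z_opt eps_gt0.
by have := lam_max _ lam'_feas; lra.
Qed.

End Duality.

Section FullLPRows.
Variables (R : realType) (n N : nat) (X : linsys R (Edge n)) (C : R)
  (p : 'I_N -> R) (d : 'I_N -> 'I_n -> R) (w : 'I_n -> R) (b : 'I_n -> nat).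
Let LP := FullLP X C p d w b.

Definition xof (u : Var n N -> R) (e : Edge n) := u (inl (inl e)).
Definition thof (u : Var n N -> R) (v : 'I_n) := u (inl (inr v)).
Definition yof (u : Var n N -> R) (xi : 'I_N) (v : 'I_n) := u (inr (xi, v)).

Definition pack (x : Edge n -> R) (theta : 'I_n -> R) (y : 'I_N -> 'I_n -> R) :
    Var n N -> R :=
  fun j => match j with
  | inl (inl e) => x e
  | inl (inr v) => theta v
  | inr (xi, v) => y xi v
  end.

Lemma lp_obj_Fobj (c : Edge n -> R) u :
  lp_obj (Fobj c) u = \sum_e c e * xof u e + \sum_v thof u v.
Proof.
rewrite /lp_obj !big_sumType /= sum_mul0l addr0; congr (_ + _).
by apply: eq_bigr => v _; rewrite mul1r.
Qed.

Lemma lhs_Xrow r u : lhs (L := LP) (inl (inl (inl (inl r)))) u = lhs r (xof u).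
Proof. by rewrite /lhs !big_sumType /= !sum_mul0l !addr0. Qed.

Lemma feasible_Xpart u : lp_feasible LP u -> lp_feasible X (xof u).
Proof.
by move=> u_feas r; have := u_feas (inl (inl (inl (inl r)))); rewrite lhs_Xrow.
Qed.

Lemma lhs_theta_row v u : lhs (L := LP) (inl (inl (inl (inr v)))) u =
  thof u v - \sum_xi p xi * w v * yof u xi v.
Proof.
rewrite /lhs !big_sumType /= sum_mul0l add0r -sumrN big_pair.
rewrite (sum_indicator (pred1 v)) big_pred1_eq; congr (_ + _).
apply: eq_bigr => xi _ /=.
under eq_bigr do rewrite -mulrA mulrCA.
by rewrite (sum_indicator (pred1 v)) big_pred1_eq mulNr.
Qed.

Lemma lhs_alpha_row xi S u : lhs (L := LP) (row_alpha X xi S) u =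
  \sum_(v in val S) yof u xi v - xE (val S) (xof u).
Proof.
rewrite /lhs !big_sumType /= sum_mul0l addr0 addrC big_pair; congr (_ + _).
  exact: (sum_indicator_pair xi (mem (val S)) (yof u)).
rewrite /xE -sumrN -[RHS]sum_indicator; apply: eq_bigr => e _.
by rewrite mulNr mulrN.
Qed.

Lemma lhs_nonneg_row xi v u : lhs (L := LP) (inl (inr (xi, v))) u = yof u xi v.
Proof.
rewrite /lhs !big_sumType /= !sum_mul0l !add0r big_pair.
by rewrite (sum_indicator_pair xi (pred1 v) (yof u)) big_pred1_eq.
Qed.

Lemma lhs_beta_row xi v u : lhs (L := LP) (row_beta X xi v) u = yof u xi v.
Proof. exact: lhs_nonneg_row. Qed.

Lemma alpha_beta_slack alpha beta u :
  \sum_xi \sum_(S : nes n) alpha xi (val S) *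
      (lhs (L := LP) (row_alpha X xi S) u - lrhs (l := LP) (row_alpha X xi S))
  + \sum_xi \sum_v beta xi v *
      (lhs (L := LP) (row_beta X xi v) u - lrhs (l := LP) (row_beta X xi v))
  = \sum_xi \sum_v (beta xi v +
        \sum_(S : {set 'I_n} | (S != set0) && (v \in S)) alpha xi S) * yof u xi v
    - (\sum_xi \sum_(S : {set 'I_n} | S != set0) alpha xi S * xE S (xof u)
       + nu C d b alpha beta).
Proof.
have split_alpha : \sum_xi \sum_(S : nes n) alpha xi (val S) *
      (lhs (L := LP) (row_alpha X xi S) u - lrhs (l := LP) (row_alpha X xi S)) =
    \sum_xi \sum_(S : nes n) alpha xi (val S) * \sum_(v in val S) yof u xi v
    - \sum_xi \sum_(S : nes n) alpha xi (val S) * xE (val S) (xof u)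
    - \sum_xi \sum_(S : nes n) alpha xi (val S) * (kxi C d xi (val S) - #|val S|%:R).
  rewrite -!sumrB; apply: eq_bigr => xi _; rewrite -!sumrB; apply: eq_bigr => S _.
  by rewrite lhs_alpha_row /=; ring.
have split_beta : \sum_xi \sum_v beta xi v *
      (lhs (L := LP) (row_beta X xi v) u - lrhs (l := LP) (row_beta X xi v)) =
    \sum_xi \sum_v beta xi v * yof u xi v - \sum_xi \sum_v beta xi v * (b v)%:R.
  rewrite -sumrB; apply: eq_bigr => xi _; rewrite -sumrB; apply: eq_bigr => v _.
  by rewrite lhs_beta_row /=; ring.
have split_gamma : \sum_xi \sum_v (beta xi v +
        \sum_(S : {set 'I_n} | (S != set0) && (v \in S)) alpha xi S) * yof u xi v =
    \sum_xi \sum_v beta xi v * yof u xi v +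
    \sum_xi \sum_(S : nes n) alpha xi (val S) * \sum_(v in val S) yof u xi v.
  rewrite -big_split; apply: eq_bigr => xi _ /=.
  rewrite -sum_exchange_mem -big_split; apply: eq_bigr => v _ /=.
  by rewrite mulrDl.
rewrite split_alpha split_beta split_gamma /nu.
under [A in _ = _ - (A + _)]eq_bigr do rewrite sum_nonempty_sets.
under [A in _ = _ - (_ + (A + _))]eq_bigr do rewrite sum_nonempty_sets.
ring.
Qed.

Lemma Gamma_of_feasible alpha beta u : lp_feasible LP u ->
  (forall xi, 0 <= p xi) -> (forall v, 0 <= w v) ->
  (forall xi (S : nes n), 0 <= alpha xi (val S)) -> (forall xi v, beta xi v <= 0) ->
  Gamma C p d w b (xof u) alpha beta (thof u) (yof u).
Proof.
move=> u_feas p_ge0 w_ge0 alpha_ge0 beta_le0.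
have y_ge0 xi v : 0 <= yof u xi v.
  by have := u_feas (inl (inr (xi, v))); rewrite lhs_nonneg_row.
have theta_ge v : \sum_xi p xi * w v * yof u xi v <= thof u v.
  by have := u_feas (inl (inl (inl (inr v)))); rewrite lhs_theta_row /= subr_ge0.
split; [|split; [|split]] => //.
- move=> v; apply: le_trans (theta_ge v); apply: sumr_ge0 => xi _.
  by rewrite !mulr_ge0.
- move=> xi v; rewrite y_ge0 /=.
  by have := u_feas (row_beta X xi v); rewrite lhs_beta_row.
- rewrite -subr_ge0 -alpha_beta_slack.
  apply: addr_ge0; apply: sumr_ge0 => xi _; apply: sumr_ge0.
    move=> S _; apply: (sign_ok_mul_slack (s := Ge) (alpha_ge0 xi S)).
    exact: u_feas (row_alpha X xi S).
  move=> v _; apply: (sign_ok_mul_slack (s := Le) (beta_le0 xi v)).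
  exact: u_feas (row_beta X xi v).
Qed.

Lemma dual_obj_le_Gamma (c : Edge n -> R) lam alpha beta x theta y :
  dual_feasible LP (Fobj c) lam ->
  (forall xi (S : nes n), alpha xi (val S) = lam (row_alpha X xi S)) ->
  (forall xi v, beta xi v = lam (row_beta X xi v)) ->
  lp_feasible X x -> Gamma C p d w b x alpha beta theta y ->
  dual_obj LP lam <= \sum_e c e * x e + \sum_v theta v.
Proof.
move=> lam_feas lam_alpha lam_beta x_feas [_ [y_bnd [y_agg theta_ge]]].
have lam_sign := lam_feas.2.
pose u := pack x theta y.
rewrite -[A in _ <= A]/(\sum_e c e * xof u e + \sum_v thof u v) -lp_obj_Fobj.
rewrite -subr_ge0 lp_obj_sub_dual_obj //.
have row_ge0 r : sat (lsense r) (lhs r u) (lrhs r) -> 0 <= lam r * (lhs r u - lrhs r).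
  exact: sign_ok_mul_slack.
pose mu (r : lrow LP) := match r with
  | inl (inl (inr (xi, Sx))) => alpha xi (val Sx)
  | inr (xi, v) => beta xi v
  | _ => lam r
  end.
rewrite (eq_bigr (fun r => mu r * (lhs r u - lrhs r))) => [|r _]; last first.
  by case: r => [[[//|[xi S]]|//]|[xi v]]; rewrite /mu ?lam_alpha ?lam_beta.
rewrite !big_sumType !big_pair /=.
set X_rows := \sum_(r : lrow X) _.
set theta_rows := \sum_(v < n) _.
set nonneg_rows := \sum_(xi < N) \sum_(v < n) lam _ * _.
have : 0 <= X_rows.
  by apply: sumr_ge0 => r _; apply: row_ge0; rewrite lhs_Xrow; apply: x_feas.
have : 0 <= theta_rows.
  apply: sumr_ge0 => v _; apply: row_ge0.
  by rewrite lhs_theta_row /= subr_ge0; apply: theta_ge.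
have : 0 <= nonneg_rows.
  apply: sumr_ge0 => xi _; apply: sumr_ge0 => v _; apply: row_ge0.
  by rewrite lhs_nonneg_row; case/andP: (y_bnd xi v).
have := alpha_beta_slack alpha beta u; rewrite -subr_ge0 in y_agg.
lra.
Qed.

End FullLPRows.

Theorem corollary4 (R : realType) (n N : nat)
    (c : Edge n -> rat) (C : rat) (d : 'I_N -> 'I_n -> rat) (p : 'I_N -> rat)
    (w : 'I_n -> rat) (b : 'I_n -> nat) (cvrp : bool) (k : nat)
    (hc : forall e, 0 <= c e) (hC : 0 < C)
    (hd : forall xi v, 0 <= d xi v <= C)
    (hp : forall xi, 0 <= p xi) (hp1 : \sum_xi p xi = 1)
    (hw : forall v, 0 <= w v)
    (zstar : R) (alpha : 'I_N -> {set 'I_n} -> R) (beta : 'I_N -> 'I_n -> R) :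
  let cR := fun e => (ratr (c e) : R) in
  let CR := (ratr C : R) in
  let dR := fun xi v => (ratr (d xi v) : R) in
  let pR := fun xi => (ratr (p xi) : R) in
  let wR := fun v => (ratr (w v) : R) in
  let X := Xsys cvrp k CR pR dR in
  let LP := FullLP X CR pR dR wR b in
  let obj := Fobj cR in
  lp_optval LP obj zstar ->
  (exists lam, dual_optimal LP obj lam /\
     (forall xi (S : nes n), alpha xi (val S) = lam (row_alpha X xi S)) /\
     (forall xi v, beta xi v = lam (row_beta X xi v))) ->
  (exists (x : Edge n -> R) (theta : 'I_n -> R),
      lp_feasible X x /\ (exists y, Gamma CR pR dR wR b x alpha beta theta y) /\
      \sum_e cR e * x e + \sum_v theta v = zstar) /\
  (forall (x : Edge n -> R) (theta : 'I_n -> R),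
      lp_feasible X x -> (exists y, Gamma CR pR dR wR b x alpha beta theta y) ->
      zstar <= \sum_e cR e * x e + \sum_v theta v).
Proof.
move=> cR CR dR pR wR X LP obj z_opt [lam [lam_opt [lam_alpha lam_beta]]].
have [[u [u_feas u_obj]] _] := z_opt.
have lam_sign := lam_opt.1.2.
split.
- exists (xof u), (thof u); split; [exact: feasible_Xpart u_feas | split].
  + exists (yof u); apply: Gamma_of_feasible u_feas _ _ _ _ => [xi|v|xi S|xi v].
    * by rewrite /pR ler0q.
    * by rewrite /wR ler0q.
    * by rewrite lam_alpha; exact: (lam_sign (row_alpha X xi S)).
    * by rewrite lam_beta; exact: (lam_sign (row_beta X xi v)).
  + by rewrite -u_obj lp_obj_Fobj.
- move=> x theta x_feas [y y_Gamma].
  apply: le_trans (optval_le_dual_optimal z_opt lam_opt) _.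
  exact: dual_obj_le_Gamma lam_opt.1 lam_alpha lam_beta x_feas y_Gamma.
Qed.
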